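(* Let $P=\{p_1,\dots,p_n\}\subset\mathbb{R}^2$ be in general position and let $f\in\mathbb{R}^{\binom n2}$ be arbitrary. Then $X_f(P)$ is bounded.
   Context: General position: no three points collinear. Infinitesimal motions $v\in(\mathbb{R}^2)^n$ are normalized by $v_1^1=v_1^2=v_2^1=0$ (with $p_1,p_2$ having different $y$-coordinates). $\bar X_f(P)$ is the set of normalized $v$ with $\langle p_i-p_j,v_i-v_j\rangle\ge f_{ij}$ for all $i<j$, and $X_f(P)$ is the subset of $\bar X_f(P)$ on which these inequalities hold with equality for every pair $ij$ that is an edge of the boundary of the convex hull of $P$. *)

From HB Require Import structures.
From mathcomp Require Import all_boot all_order all_algebra.
From mathcomp Require Import reals.
Set Implicit Arguments. Unset Strict Implicit. Unset Printing Implicit Defensive.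
Import Order.TTheory GRing.Theory Num.Theory.
Local Open Scope ring_scope.

(* Points of R^2 and infinitesimal velocities are pairs (x, y):
   component .1 is the x-coordinate (superscript 1), .2 the y-coordinate. *)
Section Defs.
Variable R : realType.

Definition dot2 (a b : R * R) : R := a.1 * b.1 + a.2 * b.2.
Definition sub2 (a b : R * R) : R * R := (a.1 - b.1, a.2 - b.2).

Definition orient (a b c : R * R) : R :=
  (b.1 - a.1) * (c.2 - a.2) - (b.2 - a.2) * (c.1 - a.1).

Variable n : nat.

Definition general_position (P : 'I_n -> R * R) : Prop :=
  forall i j k : 'I_n, i != j -> j != k -> i != k ->
    orient (P i) (P j) (P k) != 0.

Definition hull_edge (P : 'I_n -> R * R) (i j : 'I_n) : Prop :=
  i != j /\
  ((forall k : 'I_n, 0 <= orient (P i) (P j) (P k)) \/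
   (forall k : 'I_n, orient (P i) (P j) (P k) <= 0)).

Definition edge_val (P v : 'I_n -> R * R) (i j : 'I_n) : R :=
  dot2 (sub2 (P i) (P j)) (sub2 (v i) (v j)).

Definition bounded_set (S : ('I_n -> R * R) -> Prop) : Prop :=
  exists M : R, forall v, S v ->
    forall i : 'I_n, `|(v i).1| <= M /\ `|(v i).2| <= M.

End Defs.

(* normalization v_1^1 = v_1^2 = v_2^1 = 0 (indices 1,2 are ord 0, ord 1) *)
Definition normalized (R : realType) (n : nat) (v : 'I_n.+2 -> R * R) : Prop :=
  (v ord0).1 = 0 /\ (v ord0).2 = 0 /\ (v (inord 1)).1 = 0.

Definition Xbar (R : realType) (n : nat) (P : 'I_n.+2 -> R * R)
  (f : 'I_n.+2 -> 'I_n.+2 -> R) (v : 'I_n.+2 -> R * R) : Prop :=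
  normalized v /\
  forall i j : 'I_n.+2, (i < j)%N -> f i j <= edge_val P v i j.

Definition X (R : realType) (n : nat) (P : 'I_n.+2 -> R * R)
  (f : 'I_n.+2 -> 'I_n.+2 -> R) (v : 'I_n.+2 -> R * R) : Prop :=
  Xbar P f v /\
  forall i j : 'I_n.+2, (i < j)%N -> hull_edge P i j -> edge_val P v i j = f i j.

(* Walk counterclockwise around the convex hull, p_(y 0), p_(y 1), ..., p_(y m) = p_(y 0).
   On a hull edge the stretching rate is prescribed by f, so the relative velocity of
   its endpoints is determined by the angular velocity w_t of the edge.  At a hull
   vertex the inequality on the diagonal joining its two neighbours bounds
   w_(t+1) - w_t from above; these increments sum to zero around the hull, so every
   w_t - w_0 is bounded.  After subtracting the rigid rotation with angular velocity
   w_0, the relative velocities of hull vertices are therefore bounded.  An interior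
   point c lies in a fan triangle p_(y 0) p_(y t) p_(y (t+1)); the projections of its
   relative velocity on p_c - p_x (x a corner) are bounded below, and their
   combination with the barycentric weights of c vanishes, so they are bounded.
   Finally the normalization fixes both the translation and w_0. *)

From mathcomp Require Import all_boot all_order all_algebra reals.
From mathcomp Require Import ring lra zify.
Set Implicit Arguments. Unset Strict Implicit. Unset Printing Implicit Defensive.
Import Order.TTheory GRing.Theory Num.Theory.
Local Open Scope ring_scope.

Section BoundedOn.
Variables (R : realFieldType) (T : Type) (S : T -> Prop).

Definition bounded_on (Q : T -> R) := exists B, forall x, S x -> `|Q x| <= B.
Definition bounded_below_on (Q : T -> R) := exists B, forall x, S x -> B <= Q x.
Definition bounded_above_on (Q : T -> R) := exists B, forall x, S x -> Q x <= B.

Lemma bounded_onP Q : bounded_on Q <-> bounded_below_on Q /\ bounded_above_on Q.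
Proof.
split=> [[B HB]|[[a Ha] [b Hb]]].
  by split; [exists (- B) | exists B] => x Sx;
    have := HB x Sx; rewrite ler_norml => /andP[].
exists (`|a| + `|b|) => x Sx; have := Ha x Sx; have := Hb x Sx.
have := ler_norm b; have := ler_norm (- a); rewrite normrN.
have := normr_ge0 a; have := normr_ge0 b; rewrite ler_norml => *; apply/andP; lra.
Qed.

Lemma eq_bounded_on Q1 Q2 :
  (forall x, S x -> Q1 x = Q2 x) -> bounded_on Q1 -> bounded_on Q2.
Proof. by move=> E [B HB]; exists B => x Sx; rewrite -E //; apply: HB. Qed.

Lemma bounded_on_cst c : bounded_on (fun=> c).
Proof. by exists `|c|. Qed.

Lemma bounded_onD Q1 Q2 :
  bounded_on Q1 -> bounded_on Q2 -> bounded_on (fun x => Q1 x + Q2 x).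
Proof.
move=> [a Ha] [b Hb]; exists (a + b) => x Sx.
by rewrite (le_trans (ler_normD _ _)) // lerD ?Ha ?Hb.
Qed.

Lemma bounded_onN Q : bounded_on Q -> bounded_on (fun x => - Q x).
Proof. by move=> [a Ha]; exists a => x Sx; rewrite normrN Ha. Qed.

Lemma bounded_onB Q1 Q2 :
  bounded_on Q1 -> bounded_on Q2 -> bounded_on (fun x => Q1 x - Q2 x).
Proof. by move=> h1 h2; apply: bounded_onD h1 (bounded_onN h2). Qed.

Lemma bounded_onM Q1 Q2 :
  bounded_on Q1 -> bounded_on Q2 -> bounded_on (fun x => Q1 x * Q2 x).
Proof.
move=> [a Ha] [b Hb]; exists (a * b) => x Sx.
by rewrite normrM ler_pM ?Ha ?Hb.
Qed.

Lemma bounded_onMl c Q : bounded_on Q -> bounded_on (fun x => c * Q x).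
Proof. exact: bounded_onM (bounded_on_cst c). Qed.

Lemma bounded_onMr c Q : bounded_on Q -> bounded_on (fun x => Q x * c).
Proof. by move=> h; apply: bounded_onM h (bounded_on_cst c). Qed.

Lemma bounded_on_pos_comb0 (a b c : R) Q1 Q2 Q3 : 0 < a -> 0 < b -> 0 < c ->
  bounded_below_on Q1 -> bounded_below_on Q2 -> bounded_below_on Q3 ->
  (forall x, S x -> a * Q1 x + b * Q2 x + c * Q3 x = 0) -> bounded_on Q1.
Proof.
move=> a0 b0 c0 lb1 [l2 H2] [l3 H3] E; apply/bounded_onP; split => //.
exists ((- (b * l2) - c * l3) / a) => x Sx; rewrite ler_pdivlMr //.
have : b * l2 <= b * Q2 x by rewrite ler_pM2l // H2.
have : c * l3 <= c * Q3 x by rewrite ler_pM2l // H3.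
have := E x Sx; lra.
Qed.

Lemma bounded_on_cyclic_increments (h : nat -> T -> R) m :
  (forall t, bounded_above_on (fun x => h t.+1 x - h t x)) ->
  (forall x, S x -> h m x = h 0%N x) ->
  forall t, (t <= m)%N -> bounded_on (fun x => h t x - h 0%N x).
Proof.
move=> inc hm; have sum k t : bounded_above_on (fun x => h (t + k)%N x - h t x).
  elim: k => [|k [B IH]]; first by exists 0 => x _; rewrite addn0 subrr.
  have [C HC] := inc (t + k)%N; exists (C + B) => x Sx.
  by rewrite addnS -(subrK (h (t + k)%N x) (h _ x)) -addrA lerD ?HC ?IH.
move=> t tm; apply/bounded_onP; split; last by have := sum t 0%N; rewrite add0n.
have [B HB] := sum (m - t)%N t; exists (- B) => x Sx.
by have := HB x Sx; rewrite subnKC // hm //; lra.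
Qed.

Definition bounded2_on (Q : T -> R * R) :=
  bounded_on (fun x => (Q x).1) /\ bounded_on (fun x => (Q x).2).

End BoundedOn.

Lemma bounded_set_of_coords (R : realType) n (S : ('I_n -> R * R) -> Prop) :
  (forall i, bounded2_on S (fun v => v i)) -> bounded_set S.
Proof.
move=> H; have /fin_all_exists [B HB] : forall i : 'I_n, exists B : R,
    forall v, S v -> `|(v i).1| <= B /\ `|(v i).2| <= B.
  move=> i; have [[B1 H1] [B2 H2]] := H i; exists (Num.max B1 B2) => v Sv.
  by rewrite !le_max H1 ?H2 ?orbT.
exists (\sum_i `|B i|) => v Sv i.
have le : B i <= \sum_i `|B i|.
  by rewrite (le_trans (ler_norm _)) // (bigD1 i) //= lerDl sumr_ge0.
by have [h1 h2] := HB i v Sv; rewrite !(le_trans _ le).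
Qed.

Lemma exists_min_in (T : finType) (D : {pred T}) (r : rel T) :
  {in D &, total r} -> {in D & &, transitive r} ->
  forall x0, x0 \in D -> exists2 b, b \in D & {in D, forall c, r b c}.
Proof.
move=> tot tr x0 Dx0; have Ds : all [in D] (enum D) by apply/allP => x; rewrite mem_enum.
have sorted_s := sort_sorted_in tot Ds.
have mem_s c : (c \in sort r (enum D)) = (c \in D) by rewrite mem_sort mem_enum.
case: (sort r (enum D)) sorted_s mem_s => [|b s] sorted_s mem_s.
  by have := mem_s x0; rewrite Dx0.
have Db : b \in D by rewrite -mem_s mem_head.
have Dbs : all [in D] (b :: s) by apply/allP => c; rewrite mem_s.
have /allP min_b := order_path_min_in tr Dbs sorted_s.
exists b => // c; rewrite -mem_s inE => /orP[/eqP ->|/min_b //].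
by have /orP[] := tot b b Db Db.
Qed.

Section PlaneGeometry.
Variable R : realType.
Implicit Types a b c u w d : R * R.

Definition cross u w : R := u.1 * w.2 - u.2 * w.1.

Lemma orient_swapl a b c : orient a b c = - orient b a c.
Proof. rewrite /orient; ring. Qed.

Lemma orient_swapr a b c : orient a b c = - orient a c b.
Proof. rewrite /orient; ring. Qed.

Lemma orient_rot a b c : orient a b c = orient b c a.
Proof. rewrite /orient; ring. Qed.

Lemma orient_xxy a b : orient a a b = 0.
Proof. by rewrite /orient; ring. Qed.

Lemma orient_xyx a b : orient a b a = 0.
Proof. by rewrite /orient; ring. Qed.

Lemma orient_xyy a b : orient a b b = 0.
Proof. by rewrite /orient; ring. Qed.

Lemma dot2_self_gt0 u : u != (0, 0) -> 0 < dot2 u u.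
Proof.
case: u => u1 u2 nz; rewrite /dot2 /= -!expr2 lt_def addr_ge0 ?sqr_ge0 // andbT.
by rewrite paddr_eq0 ?sqr_ge0 // !sqrf_eq0 -xpair_eqE.
Qed.

Lemma sub2_eq0 a b : (sub2 a b == (0, 0)) = (a == b).
Proof. by case: a b => [a1 a2] [b1 b2]; rewrite /sub2 !xpair_eqE !subr_eq0. Qed.

Lemma sub2_sub2 a b c : sub2 (sub2 a c) (sub2 b c) = sub2 a b.
Proof. by rewrite /sub2 /=; congr pair; ring. Qed.

Definition left_halfplane u d := 0 < cross u d \/ cross u d = 0 /\ dot2 u d < 0.

Lemma left_halfplane_cross_trans u d1 d2 d3 :
  left_halfplane u d1 -> left_halfplane u d2 -> left_halfplane u d3 ->
  0 <= cross d1 d2 -> 0 <= cross d2 d3 -> 0 <= cross d1 d3.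
Proof.
have cross3 : cross u d2 * cross d1 d3 =
    cross u d1 * cross d2 d3 + cross u d3 * cross d1 d2 by rewrite /cross; ring.
have lagrange a b : dot2 u u * cross a b = dot2 u a * cross u b - cross u a * dot2 u b.
  by rewrite /cross /dot2; ring.
have cross_ge0 d : left_halfplane u d -> 0 <= cross u d by case=> [/ltW|[->]].
move=> h1 h2 h3 c12 c23; case: h2 => [p2|[z2 n2]].
  have : 0 <= cross u d2 * cross d1 d3 by rewrite cross3 addr_ge0 ?mulr_ge0 ?cross_ge0.
  by rewrite pmulr_rge0.
have uu_gt0 : 0 < dot2 u u.
  by apply: dot2_self_gt0; apply: contraTneq n2 => ->; rewrite /dot2 !mul0r addr0 ltxx.
have z3 : cross u d3 = 0.
  have := lagrange d2 d3; rewrite z2 mul0r subr0 => E.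
  have : 0 <= dot2 u d2 * cross u d3 by rewrite -E mulr_ge0 // ltW.
  by rewrite nmulr_rge0 // => le0; apply/eqP; rewrite eq_le le0 cross_ge0.
have n3 : dot2 u d3 < 0 by case: h3 => [|[]//]; rewrite z3 ltxx.
have : 0 <= dot2 u u * cross d1 d3.
  by rewrite lagrange z3 mulr0 sub0r -mulrN mulr_ge0 ?(cross_ge0 _ h1) // oppr_ge0 ltW.
by rewrite pmulr_rge0.
Qed.

Lemma dot2_sub_decompose u w du dw : u != (0, 0) -> w != (0, 0) ->
  dot2 (sub2 u w) (sub2 du dw) =
    dot2 u du + dot2 w dw
    - dot2 u w * (dot2 w dw / dot2 w w + dot2 u du / dot2 u u)
    + cross u w * (cross w dw / dot2 w w - cross u du / dot2 u u).
Proof.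
move=> /dot2_self_gt0 /lt0r_neq0 + /dot2_self_gt0 /lt0r_neq0.
case: u w du dw => [u1 u2] [w1 w2] [a1 a2] [b1 b2].
rewrite /dot2 /cross /sub2 /= => nzu nzw; field; by rewrite nzu nzw.
Qed.

Lemma bounded2_on_of_dot2 (T : Type) (S : T -> Prop) u w (Q : T -> R * R) :
  cross u w != 0 -> bounded_on S (fun x => dot2 u (Q x)) ->
  bounded_on S (fun x => dot2 w (Q x)) -> bounded2_on S Q.
Proof.
move=> nz bu bw; split.
- apply: eq_bounded_on (bounded_onMr (cross u w)^-1
    (bounded_onB (bounded_onMl w.2 bu) (bounded_onMl u.2 bw))) => x _.
  by move: nz; rewrite /dot2 /cross => nz; field.
- apply: eq_bounded_on (bounded_onMr (cross u w)^-1
    (bounded_onB (bounded_onMl u.1 bw) (bounded_onMl w.1 bu))) => x _.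
  by move: nz; rewrite /dot2 /cross => nz; field.
Qed.

End PlaneGeometry.

Definition in_triangle (R : realType) (a b d c : R * R) :=
  [/\ 0 < orient a b c, 0 < orient b d c & 0 < orient d a c].

Lemma exists_sign_change (R : realDomainType) (h : nat -> R) j :
  0 < h 0%N -> h j <= 0 -> exists2 t, (t < j)%N & 0 < h t /\ h t.+1 <= 0.
Proof.
elim: j => [|j IH] h0 hj; first by move: hj; rewrite leNgt h0.
have [hj'|hj'] := lerP (h j) 0; last by exists j.
by have [t tj ht] := IH h0 hj'; exists t => //; rewrite ltnS ltnW.
Qed.

Section ConvexHullCycle.
Variables (R : realType) (n : nat) (P : 'I_n.+3 -> R * R).
Hypothesis P_gp : general_position P.

Lemma exists_third (i j : 'I_n.+3) : exists k, i != k /\ j != k.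
Proof.
have /card_gt0P [k] : (0 < #|~: [set i; j]|)%N.
  by have := cardsC [set i; j]; rewrite card_ord cards2; case: (i != j) => /=; lia.
by rewrite !inE negb_or => /andP[ki kj]; exists k; rewrite !(eq_sym _ k).
Qed.

Lemma orient_gt0 i j k : i != j -> j != k -> i != k ->
  0 <= orient (P i) (P j) (P k) -> 0 < orient (P i) (P j) (P k).
Proof. by move=> ij jk ik; rewrite lt_def P_gp. Qed.

Lemma P_inj i j : i != j -> P i != P j.
Proof.
move=> ij; have [k [ik jk]] := exists_third i j.
by apply: contra (P_gp ij jk ik) => /eqP ->; rewrite orient_xxy.
Qed.

Definition ccw_hull_edge (k b : 'I_n.+3) :=
  (b != k) && [forall c, 0 <= orient (P k) (P b) (P c)].

Lemma ccw_hull_edgeP k b :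
  reflect (b != k /\ forall c, 0 <= orient (P k) (P b) (P c)) (ccw_hull_edge k b).
Proof. by apply: (iffP andP) => -[bk /forallP]. Qed.

Lemma ccw_hull_edge_antisym k b : ccw_hull_edge k b -> ~~ ccw_hull_edge b k.
Proof.
move=> /ccw_hull_edgeP [bk Hkb]; apply/negP => /ccw_hull_edgeP [_ Hbk].
have [c [kc bc]] := exists_third k b.
have kb : k != b by rewrite eq_sym.
have := Hbk c; rewrite orient_swapl oppr_ge0 => le0.
by have := P_gp kb bc kc; rewrite eq_le le0 Hkb.
Qed.

Definition hull_vertex (k : 'I_n.+3) :=
  exists u, forall c, c != k -> left_halfplane u (sub2 (P c) (P k)).

Lemma hull_vertex_edge k : hull_vertex k -> exists b, ccw_hull_edge k b.
Proof.
move=> [u Hu]; pose D := [pred c | c != k].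
pose r c1 c2 := 0 <= cross (sub2 (P c1) (P k)) (sub2 (P c2) (P k)).
have tot : {in D &, total r}.
  move=> c1 c2 _ _; rewrite /r.
  have -> : cross (sub2 (P c2) (P k)) (sub2 (P c1) (P k)) =
            - cross (sub2 (P c1) (P k)) (sub2 (P c2) (P k)) by rewrite /cross; ring.
  by rewrite oppr_ge0 le_total.
have tr : {in D & &, transitive r}.
  by move=> c2 c1 c3 D2 D1 D3; apply: left_halfplane_cross_trans; apply: Hu.
have [x0 [kx0 _]] := exists_third k k.
have x0D : x0 \in D by rewrite inE eq_sym.
have [b Db minb] := exists_min_in tot tr x0D.
exists b; apply/ccw_hull_edgeP; split => // c.
have [->|ck] := eqVneq c k; first by rewrite orient_xyx.
exact: minb.
Qed.

Lemma ccw_hull_edge_vertex k b : ccw_hull_edge k b -> hull_vertex b.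
Proof.
move=> /ccw_hull_edgeP [bk Hkb]; exists (sub2 (P b) (P k)) => c cb; rewrite /left_halfplane.
have -> : cross (sub2 (P b) (P k)) (sub2 (P c) (P b)) = orient (P k) (P b) (P c).
  by rewrite /cross /orient /sub2 /=; ring.
have := Hkb c; rewrite le_eqVlt => /orP[/eqP E|]; last by left.
right; split; first by rewrite -E.
have [->|ck] := eqVneq c k; last first.
  have kb : k != b by rewrite eq_sym.
  have bc : b != c by rewrite eq_sym.
  have kc : k != c by rewrite eq_sym.
  by have := P_gp kb bc kc; rewrite -E eqxx.
have -> : dot2 (sub2 (P b) (P k)) (sub2 (P k) (P b)) =
          - dot2 (sub2 (P b) (P k)) (sub2 (P b) (P k)) by rewrite /dot2 /sub2 /=; ring.
by rewrite oppr_lt0 dot2_self_gt0 // sub2_eq0 P_inj.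
Qed.

(* The lexicographically largest point sees every other point strictly to the left
   of the upward direction, or straight below it. *)
Lemma exists_hull_vertex : exists k, hull_vertex k.
Proof.
pose L (i : 'I_n.+3) : R *l R := P i.
exists [arg max_(i > ord0) L i]%O; exists (0, 1) => c.
case: Order.TotalTheory.arg_maxP => // k _ /(_ c isT) /=; rewrite leEprodlexi /=.
move=> + /P_inj; rewrite /L /left_halfplane /cross /dot2 /sub2 /=.
case: (P c) (P k) => [c1 c2] [k1 k2] /=; rewrite xpair_eqE.
have [lt _ _|//|<- /= le ne] := ltgtP c1 k1; first by left; lra.
have lt : c2 < k2 by rewrite lt_neqAle ne le.
by right; split; lra.
Qed.

Definition next_vertex k := odflt k [pick b | ccw_hull_edge k b].

Lemma next_vertexP k : hull_vertex k -> ccw_hull_edge k (next_vertex k).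
Proof.
move=> /hull_vertex_edge [b kb]; rewrite /next_vertex.
by case: pickP => [//|/(_ b)]; rewrite kb.
Qed.

Lemma hull_cycle : exists (y : nat -> 'I_n.+3) (m : nat),
  [/\ (0 < m)%N, y m = y 0%N, y m.+1 = y 1%N &
      forall t, ccw_hull_edge (y t) (y t.+1)].
Proof.
have [k0 vk0] := exists_hull_vertex; pose x t := iter t next_vertex k0.
have vx t : hull_vertex (x t).
  by elim: t => //= t IH; apply: ccw_hull_edge_vertex (next_vertexP IH).
have /injectivePn [i [j ij xij]] : ~~ injectiveb (fun i : 'I_n.+4 => x i).
  by apply/injectiveP => /leq_card; rewrite !card_ord ltnn.
have [s [t [st xst]]] : exists s t, (s < t)%N /\ x s = x t.
  case: (ltngtP i j) => [lt|gt|/val_inj ji].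
  - by exists i, j.
  - by exists j, i.
  - by rewrite ji eqxx in ij.
have x_succ u : x u.+1 = next_vertex (x u) by [].
exists (fun u => x (s + u)%N), (t - s)%N; split.
- by rewrite subn_gt0.
- by rewrite addn0 (subnKC (ltnW st)) xst.
- by rewrite addn1 addnS (subnKC (ltnW st)) x_succ -xst.
- by move=> u; rewrite addnS x_succ; apply: next_vertexP.
Qed.

Lemma hull_fan_triangle (y : nat -> 'I_n.+3) m c :
  (0 < m)%N -> y m = y 0%N -> (forall t, ccw_hull_edge (y t) (y t.+1)) ->
  (forall t, (t <= m)%N -> y t != c) ->
  exists2 t, (t < m)%N & in_triangle (P (y 0%N)) (P (y t)) (P (y t.+1)) (P c).
Proof.
move=> m_gt0 y_m y_edge c_off; set a := y 0%N.
have edge t := elimT (ccw_hull_edgeP _ _) (y_edge t).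
pose h t := orient (P a) (P (y t.+1)) (P c).
have h0 : 0 < h 0%N.
  have [y10 H] := edge 0%N.
  by apply: orient_gt0 (H c); [rewrite eq_sym | apply: c_off..].
have hm : h m.-1 <= 0 by rewrite /h prednK // y_m orient_xxy.
have [t tm [ht ht1]] := exists_sign_change h0 hm.
have t2m : (t.+2 <= m)%N by move: tm; lia.
exists t.+1; first by [].
set b := y t.+1; set d := y t.+2.
have [db Hb] := edge t.+1; rewrite -/b -/d in db Hb.
have bc : b != c by apply: c_off; apply: ltnW.
have dc : d != c by apply: c_off.
have da : d != a.
  apply: contraTneq ht => da; rewrite -leNgt /h -/b orient_swapl oppr_le0 -da; exact: Hb.
split => //.
- by apply: orient_gt0 (Hb c); rewrite // eq_sym.
- apply: orient_gt0; rewrite ?c_off // orient_rot orient_swapr oppr_ge0; exact: ht1.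
Qed.

End ConvexHullCycle.

Section MotionBounds.
Variables (R : realType) (n : nat) (P : 'I_n.+3 -> R * R).
Variable f : 'I_n.+3 -> 'I_n.+3 -> R.
Hypothesis P_gp : general_position P.

Local Notation V := ('I_n.+3 -> R * R).
Local Notation S := (X P f).

Definition fsym (i j : 'I_n.+3) := if (i < j)%N then f i j else f j i.

Lemma edge_val_sym (v : V) i j : edge_val P v i j = edge_val P v j i.
Proof. by rewrite /edge_val /dot2 /sub2 /=; ring. Qed.

Lemma X_edge_val_ge v i j : S v -> i != j -> fsym i j <= edge_val P v i j.
Proof.
move=> [[_ ge_f] _] ij; rewrite /fsym; case: ltngtP => [//|ji|/val_inj eq_ij].
- by apply: ge_f.
- by rewrite edge_val_sym; apply: ge_f.
- by rewrite eq_ij eqxx in ij.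
Qed.

Lemma X_edge_val_hull v k b : S v -> ccw_hull_edge P k b -> edge_val P v k b = fsym k b.
Proof.
move=> [_ eq_f] /ccw_hull_edgeP [bk left_kb]; rewrite /fsym.
case: ltngtP => [kb|bk'|/val_inj eq_kb].
- by apply: eq_f => //; split; [rewrite eq_sym | left].
- rewrite edge_val_sym; apply: eq_f => //; split => //; right => c.
  by rewrite orient_swapl oppr_le0.
- by rewrite eq_kb eqxx in bk.
Qed.

Definition angvel (v : V) i j :=
  cross (sub2 (P j) (P i)) (sub2 (v j) (v i)) /
  dot2 (sub2 (P j) (P i)) (sub2 (P j) (P i)).

Lemma angvel_sym v i j : angvel v i j = angvel v j i.
Proof. by rewrite /angvel /cross /dot2 /sub2 /=; congr (_ / _); ring. Qed.

Lemma angvel_turn_bounded a k b : ccw_hull_edge P a k -> ccw_hull_edge P k b ->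
  bounded_above_on S (fun v => angvel v k b - angvel v a k).
Proof.
move=> ak_edge kb_edge; have [ka left_ak] := elimT (ccw_hull_edgeP _ _ _) ak_edge.
have [bk _] := elimT (ccw_hull_edgeP _ _ _) kb_edge.
have ab : a != b by apply: contraTneq kb_edge => <-; apply: ccw_hull_edge_antisym.
set u := sub2 (P a) (P k); set w := sub2 (P b) (P k).
have u_nz : u != (0, 0) by rewrite sub2_eq0 P_inj // eq_sym.
have w_nz : w != (0, 0) by rewrite sub2_eq0 P_inj.
have cross_lt0 : cross u w < 0.
  have -> : cross u w = - orient (P a) (P k) (P b) by rewrite /cross /orient /sub2 /=; ring.
  by rewrite oppr_lt0 orient_gt0 ?left_ak // eq_sym.
set C := fsym a k + fsym k b - dot2 u w * (fsym k b / dot2 w w + fsym a k / dot2 u u).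
exists ((fsym a b - C) / cross u w) => v Sv; rewrite ler_ndivlMr //.
have := dot2_sub_decompose (sub2 (v a) (v k)) (sub2 (v b) (v k)) u_nz w_nz.
rewrite !sub2_sub2 -[dot2 u _]/(edge_val P v a k) -[dot2 w _]/(edge_val P v b k).
rewrite -[cross w _ / _]/(angvel v k b) -[cross u _ / _]/(angvel v k a) [angvel v k a]angvel_sym.
rewrite (X_edge_val_hull Sv ak_edge) edge_val_sym (X_edge_val_hull Sv kb_edge) -/C.
have := X_edge_val_ge Sv ab; rewrite /edge_val => ge E; move: ge; rewrite E.
by rewrite [_ * cross u w]mulrC; lra.
Qed.

(* The velocity of [c] relative to [x] after removing the rigid rotation
   with angular velocity [w]. *)
Definition rdefect (w : R) (v : V) c x : R * R :=
  ((v c).1 - (v x).1 + w * ((P c).2 - (P x).2),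
   (v c).2 - (v x).2 - w * ((P c).1 - (P x).1)).

Lemma rdefect_trans w v c y x : rdefect w v c x =
  ((rdefect w v c y).1 + (rdefect w v y x).1, (rdefect w v c y).2 + (rdefect w v y x).2).
Proof. by rewrite /rdefect /=; congr pair; ring. Qed.

Lemma rdefect_decompose w v k b : b != k ->
  let d := sub2 (P b) (P k) in let e := edge_val P v k b / dot2 d d in
  rdefect w v b k = (e * d.1 - (angvel v k b - w) * d.2, e * d.2 + (angvel v k b - w) * d.1).
Proof.
move=> bk d e; have : dot2 d d != 0 by rewrite lt0r_neq0 // dot2_self_gt0 // sub2_eq0 P_inj.
rewrite /e /d /rdefect /angvel /edge_val /dot2 /cross /sub2 /= => nz.
by congr pair; field.
Qed.

Section RelativeTo.
Variables (w : V -> R) (o : 'I_n.+3).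

Local Notation bounded_rdefect c := (bounded2_on S (fun v => rdefect (w v) v c o)).

Lemma bounded_rdefect_trans c y :
  bounded2_on S (fun v => rdefect (w v) v c y) -> bounded_rdefect y -> bounded_rdefect c.
Proof.
move=> [c1 c2] [y1 y2]; split.
- by apply: eq_bounded_on (bounded_onD c1 y1) => v _; rewrite [in RHS](rdefect_trans _ _ _ y).
- by apply: eq_bounded_on (bounded_onD c2 y2) => v _; rewrite [in RHS](rdefect_trans _ _ _ y).
Qed.

Lemma rdefect_dot_bounded_below c x : c != x -> bounded_rdefect x ->
  bounded_below_on S (fun v => dot2 (sub2 (P c) (P x)) (rdefect (w v) v c o)).
Proof.
move=> cx [x1 x2].
have [B HB] := bounded_onD (bounded_onMl ((P c).1 - (P x).1) x1)
                           (bounded_onMl ((P c).2 - (P x).2) x2).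
exists (fsym c x - B) => v Sv.
have -> : dot2 (sub2 (P c) (P x)) (rdefect (w v) v c o) = edge_val P v c x +
    (((P c).1 - (P x).1) * (rdefect (w v) v x o).1 + ((P c).2 - (P x).2) * (rdefect (w v) v x o).2).
  by rewrite /rdefect /edge_val /dot2 /sub2 /=; ring.
have := X_edge_val_ge Sv cx; have := HB v Sv; rewrite ler_norml => /andP[lo _]; lra.
Qed.

Lemma bounded_rdefect_in_triangle a b d c :
  in_triangle (P a) (P b) (P d) (P c) ->
  bounded_rdefect a -> bounded_rdefect b -> bounded_rdefect d -> bounded_rdefect c.
Proof.
move=> [abc bdc dac] Ba Bb Bd.
have ca : c != a by apply: contraTneq abc => ->; rewrite orient_xyx ltxx.
have cb : c != b by apply: contraTneq abc => ->; rewrite orient_xyy ltxx.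
have cd : c != d by apply: contraTneq bdc => ->; rewrite orient_xyy ltxx.
pose L x v := dot2 (sub2 (P c) (P x)) (rdefect (w v) v c o).
have La := rdefect_dot_bounded_below ca Ba.
have Lb := rdefect_dot_bounded_below cb Bb.
have Ld := rdefect_dot_bounded_below cd Bd.
(* The weights are the barycentric coordinates of [c]. *)
have sum0 v : S v -> orient (P b) (P d) (P c) * L a v + orient (P d) (P a) (P c) * L b v
                     + orient (P a) (P b) (P c) * L d v = 0.
  by move=> _; rewrite /L /orient /dot2 /sub2 /=; ring.
have La' := bounded_on_pos_comb0 bdc dac abc La Lb Ld sum0.
have Lb' : bounded_on S (L b).
  by apply: (bounded_on_pos_comb0 dac bdc abc Lb La Ld) => v Sv; rewrite [_ * L b v + _]addrC sum0.
apply: bounded2_on_of_dot2 La' Lb'.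
have -> : cross (sub2 (P c) (P a)) (sub2 (P c) (P b)) = orient (P a) (P b) (P c).
  by rewrite /cross /orient /sub2 /=; ring.
exact: lt0r_neq0.
Qed.

Lemma X_coords_bounded : (P ord0).2 != (P (inord 1)).2 ->
  (forall c, bounded_rdefect c) -> forall c, bounded2_on S (fun v => v c).
Proof.
set i1 : 'I_n.+3 := inord 1 => p12 B c.
have [B01 B02] := B ord0; have [B11 _] := B i1; have [Bc1 Bc2] := B c.
have nz : (P i1).2 - (P ord0).2 != 0 by rewrite subr_eq0 eq_sym.
have Bw : bounded_on S w.
  apply: eq_bounded_on (bounded_onMr ((P i1).2 - (P ord0).2)^-1 (bounded_onB B11 B01)).
  by move=> v [[[v01 [_ v11]] _] _]; rewrite /rdefect /= v01 v11; field.
split.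
- apply: eq_bounded_on (bounded_onB (bounded_onB Bc1 B01) (bounded_onMr ((P c).2 - (P ord0).2) Bw)).
  by move=> v [[[v01 _] _] _]; rewrite /rdefect /= v01; ring.
- apply: eq_bounded_on (bounded_onD (bounded_onB Bc2 B02) (bounded_onMr ((P c).1 - (P ord0).1) Bw)).
  by move=> v [[[_ [v02 _]] _] _]; rewrite /rdefect /= v02; ring.
Qed.

End RelativeTo.

Section HullCycleBounds.
Variables (y : nat -> 'I_n.+3) (m : nat).
Hypotheses (m_gt0 : (0 < m)%N) (y_m : y m = y 0%N) (y_m1 : y m.+1 = y 1%N).
Hypothesis y_edge : forall t, ccw_hull_edge P (y t) (y t.+1).

Definition hull_angvel v := angvel v (y 0%N) (y 1%N).

Lemma angvel_cycle_bounded t : (t <= m)%N ->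
  bounded_on S (fun v => angvel v (y t) (y t.+1) - hull_angvel v).
Proof.
apply: (bounded_on_cyclic_increments (h := fun t v => angvel v (y t) (y t.+1))).
- by move=> s; apply: angvel_turn_bounded.
- by move=> v _; rewrite y_m y_m1.
Qed.

Lemma rdefect_cycle_bounded t : (t <= m)%N ->
  bounded2_on S (fun v => rdefect (hull_angvel v) v (y t) (y 0%N)).
Proof.
elim: t => [_|t IH tm].
  by split; exists 0 => v _; rewrite /rdefect /= !subrr mulr0 ?addr0 ?subr0 normr0.
apply: bounded_rdefect_trans (IH (ltnW tm)).
have [bk _] := elimT (ccw_hull_edgeP _ _ _) (y_edge t).
have Bw := angvel_cycle_bounded (ltnW tm).
set d := sub2 (P (y t.+1)) (P (y t)); set e := fsym (y t) (y t.+1) / dot2 d d.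
split.
- apply: eq_bounded_on (bounded_onB (bounded_on_cst _ (e * d.1)) (bounded_onMr d.2 Bw)).
  by move=> v Sv; rewrite rdefect_decompose //= (X_edge_val_hull Sv (y_edge t)).
- apply: eq_bounded_on (bounded_onD (bounded_on_cst _ (e * d.2)) (bounded_onMr d.1 Bw)).
  by move=> v Sv; rewrite rdefect_decompose //= (X_edge_val_hull Sv (y_edge t)).
Qed.

Lemma rdefect_bounded c : bounded2_on S (fun v => rdefect (hull_angvel v) v c (y 0%N)).
Proof.
have [/existsP [t /eqP <-]|off] := boolP [exists t : 'I_m.+1, y t == c].
  by apply: rdefect_cycle_bounded; rewrite -ltnS.
have [t tm tri] : exists2 t, (t < m)%N & in_triangle (P (y 0%N)) (P (y t)) (P (y t.+1)) (P c).
  apply: hull_fan_triangle => // t tm; apply: contraNneq off => <-.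
  by apply/existsP; exists (Ordinal (tm : (t < m.+1)%N)).
apply: bounded_rdefect_in_triangle tri _ _ _; apply: rdefect_cycle_bounded => //.
exact: ltnW.
Qed.

End HullCycleBounds.

End MotionBounds.

Lemma X_two_points_bounded (R : realType) (P : 'I_2 -> R * R) f :
  (P ord0).2 != (P (inord 1)).2 -> bounded_set (X P f).
Proof.
set i1 : 'I_2 := inord 1 => p12.
have ord2 (k : 'I_2) : k = ord0 \/ k = i1.
  by case: k => [[|[|//]] ?]; [left | right]; apply: val_inj; rewrite //= inordK.
have lt01 : ((ord0 : 'I_2) < i1)%N by rewrite inordK.
have hull : hull_edge P ord0 i1.
  split; first by rewrite -val_eqE /= inordK.
  by left => k; case: (ord2 k) => ->; rewrite ?orient_xyx ?orient_xyy.
apply: bounded_set_of_coords => k.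
have v1 v : X P f v -> (v i1).2 = f ord0 i1 / ((P i1).2 - (P ord0).2).
  move=> [[[v01 [v02 v11]] _] eq_f]; rewrite -(eq_f _ _ lt01 hull).
  have nz : (P i1).2 - (P ord0).2 != 0 by rewrite subr_eq0 eq_sym.
  by rewrite /edge_val /dot2 /sub2 /= v01 v02 v11; field.
case: (ord2 k) => ->; split.
- by exists 0 => v [[[v01 _] _] _]; rewrite v01 normr0.
- by exists 0 => v [[[_ [v02 _]] _] _]; rewrite v02 normr0.
- by exists 0 => v [[[_ [_ v11]] _] _]; rewrite v11 normr0.
- by exists `|f ord0 i1 / ((P i1).2 - (P ord0).2)| => v /v1 ->.
Qed.

Theorem lemma3p4 (R : realType) (n : nat) (P : 'I_n.+2 -> R * R)
  (f : 'I_n.+2 -> 'I_n.+2 -> R) :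
  general_position P ->
  (P ord0).2 != (P (inord 1)).2 ->
  bounded_set (X P f).
Proof.
case: n P f => [|n] P f P_gp p12; first exact: X_two_points_bounded.
have [y [m [m_gt0 y_m y_m1 y_edge]]] := hull_cycle P_gp.
apply/bounded_set_of_coords/(X_coords_bounded (w := hull_angvel P y) p12) => c.
exact (rdefect_bounded f P_gp m_gt0 y_m y_m1 y_edge c).
Qed.
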